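(* Let $\gamma>0$, let $\Lambda(\boldsymbol z,n)$ be a rank-1 lattice and let $\mathcal A(\boldsymbol z,n)=\{\boldsymbol h_\xi:\xi=0,\dots,n-1\}$ be a full-cardinality anti-aliasing set, with $\boldsymbol h_\xi\cdot\boldsymbol z\equiv\xi\pmod n$, chosen with minimal $\ell_2$ norm: $\|\boldsymbol h_\xi\|_2=\min\{\|\boldsymbol h'\|_2:\boldsymbol h'\in\mathbb Z^d,\ \boldsymbol h'\cdot\boldsymbol z\equiv\xi\pmod n\}$ for each $\xi$. Let $v\in E_\alpha(\mathbb T^d)$ (potential) and $g\in E_\beta(\mathbb T^d)$ with $\beta\ge2$. Let $D=\frac\gamma2D_n$ and $W=\frac1\gamma W_n$, where $D_n=\mathrm{diag}\big((4\pi^2\|\boldsymbol h_\xi\|_2^2)_{\xi=0}^{n-1}\big)$ and $W_n=F_nV_nF_n^{-1}$. Then: (i) If $\alpha>5/2$, there is a constant $c_1$, depending only on $d,\alpha,\gamma$ and $v$ (not on $\boldsymbol z$, $n$ or $\boldsymbol y$), such that $\|[D,W]\boldsymbol y\|_2\le c_1\|(D+I)\boldsymbol y\|_2$ for all $\boldsymbol y\in\mathbb R^n$. (ii) If $\alpha>9/2$, there is a constant $c_2$, depending only on $d,\alpha,\gamma$ and $v$ (not on $\boldsymbol z$, $n$ or $\boldsymbol y$), such that $\|[D,[D,W]]\boldsymbol y\|_2\le c_2\|(D+I)^2\boldsymbol y\|_2$ for all $\boldsymbol y\in\mathbb R^n$.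
   Context: Rank-1 lattice: for $\boldsymbol z\in\mathbb Z^d$ with components coprime to $n$, $\Lambda(\boldsymbol z,n)=\{\boldsymbol p_k:=(k\boldsymbol z/n)\bmod1:k=0,\dots,n-1\}$. Its dual $\Lambda^\perp(\boldsymbol z,n)=\{\boldsymbol h\in\mathbb Z^d:\boldsymbol h\cdot\boldsymbol z\equiv0\pmod n\}$; an anti-aliasing set is $\mathcal A\subset\mathbb Z^d$ with differences of distinct elements not in $\Lambda^\perp$; full cardinality means $|\mathcal A|=n$, so it contains exactly one $\boldsymbol h_\xi$ with $\boldsymbol h_\xi\cdot\boldsymbol z\equiv\xi$ for each $\xi\in\mathbb Z_n$. $F_n=\frac1{\sqrt n}(\exp(-2\pi\mathrm i\,k\xi/n))_{\xi,k=0}^{n-1}$ (unitary), $V_n=\mathrm{diag}(v(\boldsymbol p_0),\dots,v(\boldsymbol p_{n-1}))$. $[A,B]=AB-BA$; $\|\cdot\|_2$ the Euclidean norm; $I$ the identity. Korobov space $E_\alpha(\mathbb T^d)=\{f\in L_2(\mathbb T^d):\sum_{\boldsymbol h\in\mathbb Z^d}|\widehat f(\boldsymbol h)|^2\prod_{j=1}^d\max(|h_j|^{2\alpha},1)<\infty\}$, $\widehat f(\boldsymbol h)=\int_{[0,1]^d}f(\boldsymbol x)e^{-2\pi\mathrm i\boldsymbol h\cdot\boldsymbol x}\mathrm d\boldsymbol x$. *)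

From Stdlib Require Import Reals Lra Lia ZArith List.
Import ListNotations.
Open Scope R_scope.

Definition Cpx : Type := (R * R)%type.
Definition C0 : Cpx := (0, 0).
Definition C1 : Cpx := (1, 0).
Definition RtoC (a : R) : Cpx := (a, 0).
Definition Cadd (u w : Cpx) : Cpx := (fst u + fst w, snd u + snd w).
Definition Csub (u w : Cpx) : Cpx := (fst u - fst w, snd u - snd w).
Definition Cmul (u w : Cpx) : Cpx :=
  (fst u * fst w - snd u * snd w, fst u * snd w + snd u * fst w).
Definition Cmod2 (u : Cpx) : R := fst u * fst u + snd u * snd u.
Definition Cexpi (t : R) : Cpx := (cos t, sin t).

Definition Rsum_list {A} (f : A -> R) (l : list A) : R :=
  fold_right Rplus 0 (map f l).
Definition Csum_list {A} (f : A -> Cpx) (l : list A) : Cpx :=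
  fold_right Cadd C0 (map f l).
Definition Csum (n : nat) (f : nat -> Cpx) : Cpx := Csum_list f (seq 0 n).
Definition Rsum (n : nat) (f : nat -> R) : R := Rsum_list f (seq 0 n).

Definition dotZ (h z : list Z) : Z :=
  fold_right Z.add 0%Z (map (fun p => (fst p * snd p)%Z) (combine h z)).
Definition dotZR (h : list Z) (x : list R) : R :=
  Rsum_list (fun p => IZR (fst p) * snd p) (combine h x).
Definition subZ (h h' : list Z) : list Z :=
  map (fun p => (fst p - snd p)%Z) (combine h h').
Definition normsqZ (h : list Z) : R := Rsum_list (fun a => IZR a * IZR a) h.
Definition norm2Z (h : list Z) : R := sqrt (normsqZ h).

Definition congr (h z : list Z) (n xi : nat) : Prop :=
  Z.modulo (dotZ h z - Z.of_nat xi) (Z.of_nat n) = 0%Z.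
Definition in_dual (h z : list Z) (n : nat) : Prop :=
  Z.modulo (dotZ h z) (Z.of_nat n) = 0%Z.

(* cubes [-N,N]^d of Z^d, used to define sums over Z^d *)
Definition zrange (N : nat) : list Z :=
  map (fun k => (Z.of_nat k - Z.of_nat N)%Z) (seq 0 (2 * N + 1)).
Fixpoint box (d N : nat) : list (list Z) :=
  match d with
  | O => [[]]
  | S d' => flat_map (fun a => map (cons a) (box d' N)) (zrange N)
  end.

Definition kfactor (alpha : R) (a : Z) : R :=
  if Z.eqb a 0 then 1 else Rmax (Rpower (IZR (Z.abs a)) (2 * alpha)) 1.
Definition kweight (alpha : R) (h : list Z) : R :=
  fold_right Rmult 1 (map (kfactor alpha) h).
(* sum_{h in Z^d} |c(h)|^2 prod_j max(|h_j|^{2alpha},1) < infinity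
   (nonnegative terms: bounded partial sums over the cubes) *)
Definition korobov (d : nat) (alpha : R) (c : list Z -> Cpx) : Prop :=
  exists M : R, forall N : nat,
    Rsum_list (fun h => Cmod2 (c h) * kweight alpha h) (box d N) <= M.

(* f(x) = sum_{h in Z^d} c(h) e^{2 pi i h.x}  (limit of cube partial sums) *)
Definition fourier_partial (d : nat) (c : list Z -> Cpx) (x : list R) (N : nat) : Cpx :=
  Csum_list (fun h => Cmul (c h) (Cexpi (2 * PI * dotZR h x))) (box d N).
Definition fourier_series_at (d : nat) (c : list Z -> Cpx) (x : list R) (val : Cpx) : Prop :=
  Un_cv (fun N => fst (fourier_partial d c x N)) (fst val) /\
  Un_cv (fun N => snd (fourier_partial d c x N)) (snd val).

Definition latpt (z : list Z) (n k : nat) : list R :=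
  map (fun zj => IZR (Z.modulo (Z.of_nat k * zj) (Z.of_nat n)) / INR n) z.
Definition coprime_gen (z : list Z) (n : nat) : Prop :=
  Forall (fun zj => Z.gcd zj (Z.of_nat n) = 1%Z) z.

(* ---------- n x n complex matrices (indices 0..n-1) ---------- *)
Definition mat : Type := nat -> nat -> Cpx.
Definition cvec : Type := nat -> Cpx.
Definition mmul (n : nat) (A B : mat) : mat :=
  fun i j => Csum n (fun k => Cmul (A i k) (B k j)).
Definition mvec (n : nat) (A : mat) (y : cvec) : cvec :=
  fun i => Csum n (fun k => Cmul (A i k) (y k)).
Definition madd (A B : mat) : mat := fun i j => Cadd (A i j) (B i j).
Definition msub (A B : mat) : mat := fun i j => Csub (A i j) (B i j).
Definition mscale (a : R) (A : mat) : mat := fun i j => Cmul (RtoC a) (A i j).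
Definition idm : mat := fun i j => if Nat.eqb i j then C1 else C0.
Definition diagm (f : nat -> Cpx) : mat := fun i j => if Nat.eqb i j then f i else C0.
Definition comm (n : nat) (A B : mat) : mat := msub (mmul n A B) (mmul n B A).
Definition vnorm (n : nat) (x : cvec) : R := sqrt (Rsum n (fun i => Cmod2 (x i))).
Definition realvec (y : nat -> R) : cvec := fun i => RtoC (y i).
Definition is_inverse (n : nat) (A B : mat) : Prop :=
  forall i j, (i < n)%nat -> (j < n)%nat ->
    mmul n A B i j = idm i j /\ mmul n B A i j = idm i j.

Definition Fmat (n : nat) : mat :=
  fun xi k => Cmul (RtoC (/ sqrt (INR n)))
                   (Cexpi (- (2 * PI * INR k * INR xi / INR n))).
Definition Vmat (v : list R -> Cpx) (z : list Z) (n : nat) : mat :=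
  diagm (fun k => v (latpt z n k)).
Definition Dnmat (h : nat -> list Z) : mat :=
  diagm (fun xi => RtoC (4 * PI ^ 2 * (norm2Z (h xi)) ^ 2)).

Definition minimal_aa_set (d : nat) (z : list Z) (n : nat) (h : nat -> list Z) : Prop :=
  (forall xi, (xi < n)%nat -> length (h xi) = d /\ congr (h xi) z n xi) /\
  (forall xi xi', (xi < n)%nat -> (xi' < n)%nat -> xi <> xi' ->
     ~ in_dual (subZ (h xi) (h xi')) z n) /\
  (forall xi (h' : list Z), (xi < n)%nat -> length h' = d -> congr h' z n xi ->
     norm2Z (h xi) <= norm2Z h').

From Stdlib Require Import Reals ZArith List Lra Lia.
Import ListNotations.
Open Scope R_scope.

(* Entry [(i, j)] of [F_n V_n F_n^-1] is the discrete Fourier coefficient at [j - i]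
   of the samples [v(p_k)], i.e. the sum of the Fourier coefficients [c(m)] over the
   frequencies [m] with [m . z + j - i = 0 (mod n)].  For such [m], [h_j + m] lies in
   the class of [i], so minimality of [h_i] gives
   [| |h_i|^2 - |h_j|^2 | <= (1 + |h_j|^2) (1 + 2 |m|^2)].  The entries of [[D,W]]
   (p = 1) and [[D,[D,W]]] (p = 2) are therefore bounded by [K_ij (1 + lambda_j)^p],
   where every frequency contributes at most once to each row and column of [K], with
   weight [|c(m)| (1 + 2 |m|^2)^p].  By Cauchy-Schwarz against the Korobov weight these
   weights are summable as soon as [alpha > 2p + 1/2], and the Schur test bounds the
   operator norm of [K] independently of [z] and [n]. *)

Lemma Rsum_list_app {A} (f : A -> R) l1 l2 :
  Rsum_list f (l1 ++ l2) = Rsum_list f l1 + Rsum_list f l2.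
Proof. induction l1; unfold Rsum_list in *; simpl; try rewrite IHl1; lra. Qed.

Lemma Rsum_list_ext {A} (f g : A -> R) l :
  (forall x, In x l -> f x = g x) -> Rsum_list f l = Rsum_list g l.
Proof.
  induction l; intros H; unfold Rsum_list in *; simpl; auto.
  rewrite H by now left. f_equal. apply IHl. intros; apply H; now right.
Qed.

Lemma Rsum_list_le {A} (f g : A -> R) l :
  (forall x, In x l -> f x <= g x) -> Rsum_list f l <= Rsum_list g l.
Proof.
  induction l; intros H; unfold Rsum_list in *; simpl; try lra.
  apply Rplus_le_compat; [apply H; now left | apply IHl; intros; apply H; now right].
Qed.

Lemma Rsum_list_plus {A} (f g : A -> R) l :
  Rsum_list (fun x => f x + g x) l = Rsum_list f l + Rsum_list g l.
Proof. induction l; unfold Rsum_list in *; simpl; try rewrite IHl; lra. Qed.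

Lemma Rsum_list_minus {A} (f g : A -> R) l :
  Rsum_list (fun x => f x - g x) l = Rsum_list f l - Rsum_list g l.
Proof. induction l; unfold Rsum_list in *; simpl; try rewrite IHl; lra. Qed.

Lemma Rsum_list_scal {A} (f : A -> R) c l :
  Rsum_list (fun x => c * f x) l = c * Rsum_list f l.
Proof. induction l; unfold Rsum_list in *; simpl; try rewrite IHl; lra. Qed.

Lemma Rsum_list_zero {A} (f : A -> R) l :
  (forall x, In x l -> f x = 0) -> Rsum_list f l = 0.
Proof.
  intros H. rewrite (Rsum_list_ext f (fun x => 0 * 0)) by (intros; rewrite H; auto; ring).
  rewrite Rsum_list_scal; ring.
Qed.

Lemma Rsum_list_nonneg {A} (f : A -> R) l :
  (forall x, In x l -> 0 <= f x) -> 0 <= Rsum_list f l.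
Proof.
  intros H. rewrite <- (Rsum_list_zero (fun _ => 0) l) by auto.
  now apply Rsum_list_le.
Qed.

Lemma Rsum_list_map {A B} (f : B -> R) (g : A -> B) l :
  Rsum_list f (map g l) = Rsum_list (fun x => f (g x)) l.
Proof. unfold Rsum_list; now rewrite map_map. Qed.

Lemma Rsum_list_flat_map {A B} (f : B -> R) (g : A -> list B) l :
  Rsum_list f (flat_map g l) = Rsum_list (fun x => Rsum_list f (g x)) l.
Proof. induction l; simpl; auto. now rewrite Rsum_list_app, IHl. Qed.

Lemma Rsum_list_swap {A B} (f : A -> B -> R) l1 l2 :
  Rsum_list (fun a => Rsum_list (f a) l2) l1 =
  Rsum_list (fun b => Rsum_list (fun a => f a b) l1) l2.
Proof.
  induction l1; simpl.
  - symmetry; now apply Rsum_list_zero.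
  - change (Rsum_list (f a) l2 + Rsum_list (fun a => Rsum_list (f a) l2) l1 =
      Rsum_list (fun b => f a b + Rsum_list (fun a => f a b) l1) l2).
    now rewrite IHl1, Rsum_list_plus.
Qed.

Lemma Csum_list_fst {A} (f : A -> Cpx) l :
  fst (Csum_list f l) = Rsum_list (fun x => fst (f x)) l.
Proof. induction l; unfold Csum_list, Rsum_list in *; simpl; auto. now rewrite IHl. Qed.

Lemma Csum_list_snd {A} (f : A -> Cpx) l :
  snd (Csum_list f l) = Rsum_list (fun x => snd (f x)) l.
Proof. induction l; unfold Csum_list, Rsum_list in *; simpl; auto. now rewrite IHl. Qed.

Lemma Cpx_ext (u w : Cpx) : fst u = fst w -> snd u = snd w -> u = w.
Proof. destruct u, w; simpl; intros; now subst. Qed.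

Lemma Csum_list_ext {A} (f g : A -> Cpx) l :
  (forall x, In x l -> f x = g x) -> Csum_list f l = Csum_list g l.
Proof.
  intros H; apply Cpx_ext; [rewrite !Csum_list_fst | rewrite !Csum_list_snd];
  apply Rsum_list_ext; intros; now rewrite H.
Qed.

Lemma Cmul_Csum_list_l {A} u (f : A -> Cpx) l :
  Cmul u (Csum_list f l) = Csum_list (fun x => Cmul u (f x)) l.
Proof.
  apply Cpx_ext; unfold Cmul; simpl; rewrite !Csum_list_fst, !Csum_list_snd; simpl.
  - now rewrite <- !Rsum_list_scal, <- Rsum_list_minus.
  - now rewrite <- !Rsum_list_scal, <- Rsum_list_plus.
Qed.

Lemma Cmul_Csum_list_r {A} u (f : A -> Cpx) l :
  Cmul (Csum_list f l) u = Csum_list (fun x => Cmul (f x) u) l.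
Proof.
  apply Cpx_ext; unfold Cmul; simpl; rewrite !Csum_list_fst, !Csum_list_snd; simpl;
  rewrite !(Rmult_comm _ (fst u)), !(Rmult_comm _ (snd u)), <- !Rsum_list_scal;
  [rewrite <- Rsum_list_minus | rewrite <- Rsum_list_plus];
  apply Rsum_list_ext; intros; ring.
Qed.

Lemma Csum_list_swap {A B} (f : A -> B -> Cpx) l1 l2 :
  Csum_list (fun a => Csum_list (f a) l2) l1 =
  Csum_list (fun b => Csum_list (fun a => f a b) l1) l2.
Proof.
  apply Cpx_ext; [rewrite !Csum_list_fst | rewrite !Csum_list_snd].
  - rewrite (Rsum_list_ext _ (fun a => Rsum_list (fun b => fst (f a b)) l2))
      by (intros; apply Csum_list_fst).
    rewrite Rsum_list_swap. apply Rsum_list_ext; intros; now rewrite Csum_list_fst.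
  - rewrite (Rsum_list_ext _ (fun a => Rsum_list (fun b => snd (f a b)) l2))
      by (intros; apply Csum_list_snd).
    rewrite Rsum_list_swap. apply Rsum_list_ext; intros; now rewrite Csum_list_snd.
Qed.

Lemma Rsum_S n f : Rsum (S n) f = Rsum n f + f n.
Proof. unfold Rsum. rewrite seq_S, Rsum_list_app. unfold Rsum_list; simpl; ring. Qed.

Lemma Rsum_shift n f : Rsum n (fun k => f (S k)) = Rsum n f + f n - f 0%nat.
Proof.
  assert (Rsum (S n) f = f 0%nat + Rsum n (fun k => f (S k))).
  { unfold Rsum, Rsum_list. simpl (seq 0 (S n)).
    rewrite <- seq_shift. simpl map. rewrite map_map. reflexivity. }
  rewrite Rsum_S in H. lra.
Qed.

Lemma Rsum_ext n f g : (forall k, (k < n)%nat -> f k = g k) -> Rsum n f = Rsum n g.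
Proof. intros H; apply Rsum_list_ext; intros x Hx; apply in_seq in Hx; apply H; lia. Qed.

Lemma Rsum_le n f g : (forall k, (k < n)%nat -> f k <= g k) -> Rsum n f <= Rsum n g.
Proof. intros H; apply Rsum_list_le; intros x Hx; apply in_seq in Hx; apply H; lia. Qed.

Lemma Rsum_nonneg n f : (forall k, (k < n)%nat -> 0 <= f k) -> 0 <= Rsum n f.
Proof. intros H; apply Rsum_list_nonneg; intros x Hx; apply in_seq in Hx; apply H; lia. Qed.

Lemma Rsum_scal n f c : Rsum n (fun k => c * f k) = c * Rsum n f.
Proof. apply Rsum_list_scal. Qed.

Lemma Rsum_plus n f g : Rsum n (fun k => f k + g k) = Rsum n f + Rsum n g.
Proof. apply Rsum_list_plus. Qed.

Lemma Rsum_swap n m (f : nat -> nat -> R) :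
  Rsum n (fun i => Rsum m (fun j => f i j)) = Rsum m (fun j => Rsum n (fun i => f i j)).
Proof. apply Rsum_list_swap. Qed.

Lemma Rsum_const n c : Rsum n (fun _ => c) = INR n * c.
Proof.
  induction n; [unfold Rsum, Rsum_list; simpl; ring|].
  rewrite Rsum_S, IHn, S_INR; ring.
Qed.

Lemma Rsum_unique n f i : (i < n)%nat ->
  (forall k, (k < n)%nat -> k <> i -> f k = 0) -> Rsum n f = f i.
Proof.
  induction n; intros Hi H; [lia|]. rewrite Rsum_S.
  destruct (Nat.eq_dec i n) as [->|Hne].
  - replace (Rsum n f) with 0; [ring|]. symmetry; apply Rsum_list_zero.
    intros x Hx; apply in_seq in Hx; apply H; lia.
  - rewrite IHn, (H n); [ring | lia | lia | lia | intros; apply H; lia].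
Qed.

Lemma Rsum_indicator_le_1 n (P : nat -> bool) :
  (forall j j', (j < n)%nat -> (j' < n)%nat -> P j = true -> P j' = true -> j = j') ->
  Rsum n (fun j => if P j then 1 else 0) <= 1.
Proof.
  induction n; intros H; [unfold Rsum, Rsum_list; simpl; lra|].
  rewrite Rsum_S. destruct (P n) eqn:Pn.
  - replace (Rsum n _) with 0; [lra|]. symmetry; apply Rsum_list_zero.
    intros k Hk; apply in_seq in Hk.
    destruct (P k) eqn:Pk; auto. assert (k = n) by (apply H; auto; lia). lia.
  - enough (Rsum n (fun j => if P j then 1 else 0) <= 1) by lra.
    apply IHn; intros; apply H; auto; lia.
Qed.

Lemma Csum_fst n f : fst (Csum n f) = Rsum n (fun k => fst (f k)).
Proof. apply Csum_list_fst. Qed.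

Lemma Csum_snd n f : snd (Csum n f) = Rsum n (fun k => snd (f k)).
Proof. apply Csum_list_snd. Qed.

Lemma Csum_ext n f g : (forall k, (k < n)%nat -> f k = g k) -> Csum n f = Csum n g.
Proof. intros H; apply Csum_list_ext; intros x Hx; apply in_seq in Hx; apply H; lia. Qed.

Lemma Csum_unique n (f : nat -> Cpx) i : (i < n)%nat ->
  (forall k, (k < n)%nat -> k <> i -> f k = C0) -> Csum n f = f i.
Proof.
  intros Hi H. apply Cpx_ext; [rewrite Csum_fst | rewrite Csum_snd];
  apply (Rsum_unique n (fun k => _ (f k))); auto; intros; now rewrite H.
Qed.

Lemma Csum_add n f g : Csum n (fun k => Cadd (f k) (g k)) = Cadd (Csum n f) (Csum n g).
Proof.
  apply Cpx_ext; simpl; rewrite ?Csum_fst, ?Csum_snd;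
  apply Rsum_list_plus.
Qed.

Lemma Cmul_assoc a b c : Cmul a (Cmul b c) = Cmul (Cmul a b) c.
Proof. apply Cpx_ext; unfold Cmul; simpl; ring. Qed.

Lemma Cmul_comm a b : Cmul a b = Cmul b a.
Proof. apply Cpx_ext; unfold Cmul; simpl; ring. Qed.

Lemma Cmul_RtoC a b : Cmul (RtoC a) (RtoC b) = RtoC (a * b).
Proof. apply Cpx_ext; unfold Cmul, RtoC; simpl; ring. Qed.

Definition Cabs (u : Cpx) : R := sqrt (Cmod2 u).

Lemma Cmod2_nonneg u : 0 <= Cmod2 u.
Proof. unfold Cmod2; nra. Qed.

Lemma Cabs_nonneg u : 0 <= Cabs u.
Proof. apply sqrt_pos. Qed.

Lemma Cabs_sqr u : Cabs u * Cabs u = Cmod2 u.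
Proof. apply sqrt_sqrt, Cmod2_nonneg. Qed.

Lemma Cabs_mul u w : Cabs (Cmul u w) = Cabs u * Cabs w.
Proof.
  unfold Cabs. rewrite <- sqrt_mult by apply Cmod2_nonneg. f_equal.
  unfold Cmod2, Cmul; simpl; ring.
Qed.

Lemma Cabs_triang u w : Cabs (Cadd u w) <= Cabs u + Cabs w.
Proof.
  assert (Hcs : fst u * fst w + snd u * snd w <= Cabs u * Cabs w)
    by apply sqrt_cauchy.
  pose proof (Cabs_sqr u); pose proof (Cabs_sqr w).
  pose proof (Cabs_nonneg u); pose proof (Cabs_nonneg w).
  unfold Cabs at 1. rewrite <- (sqrt_square (Cabs u + Cabs w)) by lra.
  apply sqrt_le_1_alt. unfold Cmod2, Cadd in *; simpl in *. nra.
Qed.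

Lemma Cabs_Csum_list {A} (f : A -> Cpx) l :
  Cabs (Csum_list f l) <= Rsum_list (fun x => Cabs (f x)) l.
Proof.
  induction l; unfold Csum_list, Rsum_list in *; simpl.
  - unfold Cabs, Cmod2; simpl. rewrite Rmult_0_l, Rplus_0_l, sqrt_0; lra.
  - eapply Rle_trans; [apply Cabs_triang | lra].
Qed.

Lemma Cabs_RtoC a : Cabs (RtoC a) = Rabs a.
Proof.
  unfold Cabs, Cmod2, RtoC; simpl. rewrite Rmult_0_l, Rplus_0_r.
  apply sqrt_Rsqr_abs.
Qed.

Lemma Cabs_le_Rabs_fst_snd u : Cabs u <= Rabs (fst u) + Rabs (snd u).
Proof.
  pose proof (Rabs_pos (fst u)); pose proof (Rabs_pos (snd u)).
  unfold Cabs, Cmod2. rewrite <- (sqrt_square (Rabs (fst u) + Rabs (snd u))) by lra.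
  apply sqrt_le_1_alt.
  assert (Rabs (fst u) * Rabs (fst u) = fst u * fst u)
    by (rewrite <- Rabs_mult; apply Rabs_pos_eq; nra).
  assert (Rabs (snd u) * Rabs (snd u) = snd u * snd u)
    by (rewrite <- Rabs_mult; apply Rabs_pos_eq; nra).
  nra.
Qed.

Lemma Cabs_Cexpi t : Cabs (Cexpi t) = 1.
Proof.
  unfold Cabs, Cmod2, Cexpi; simpl. pose proof (sin2_cos2 t). unfold Rsqr in H.
  replace (cos t * cos t + sin t * sin t) with 1 by lra. apply sqrt_1.
Qed.

Lemma Cexpi_add a b : Cmul (Cexpi a) (Cexpi b) = Cexpi (a + b).
Proof.
  apply Cpx_ext; unfold Cmul, Cexpi; simpl;
  [rewrite cos_plus | rewrite sin_plus]; ring.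
Qed.

Lemma Cexpi_2PI_IZR q : Cexpi (2 * PI * IZR q) = C1.
Proof.
  assert (Hnat : forall k, Cexpi (2 * PI * INR k) = C1).
  { intros k. unfold Cexpi, C1.
    replace (2 * PI * INR k) with (0 + 2 * INR k * PI) by ring.
    now rewrite cos_period, sin_period, cos_0, sin_0. }
  destruct (Z_le_gt_dec 0 q).
  - rewrite <- (Z2Nat.id q), <- INR_IZR_INZ by lia. apply Hnat.
  - replace q with (- Z.of_nat (Z.to_nat (- q)))%Z by lia.
    rewrite opp_IZR, <- INR_IZR_INZ.
    pose proof (Hnat (Z.to_nat (- q))) as H. unfold Cexpi, C1 in *. injection H as Hc Hs.
    replace (2 * PI * - INR (Z.to_nat (- q))) with (- (2 * PI * INR (Z.to_nat (- q)))) by ring.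
    rewrite cos_neg, sin_neg, Hc, Hs. f_equal; ring.
Qed.

Lemma Cexpi_add_2PI_IZR x q : Cexpi (x + 2 * PI * IZR q) = Cexpi x.
Proof.
  rewrite <- Cexpi_add, Cexpi_2PI_IZR.
  apply Cpx_ext; unfold Cmul, C1; simpl; ring.
Qed.

Lemma Cexpi_eq_C1 x : Cexpi (2 * PI * x) = C1 -> exists k : Z, x = IZR k.
Proof.
  intros H. injection H as Hc _.
  replace (2 * PI * x) with (2 * (PI * x)) in Hc by ring.
  rewrite cos_2a_sin in Hc. assert (Hs : sin (PI * x) = 0) by nra.
  apply sin_eq_0_0 in Hs as [k Hk]. exists k.
  pose proof PI_RGT_0. apply (Rmult_eq_reg_l PI); [rewrite Hk; ring | lra].
Qed.

Lemma Cmul_eq_self_C0 w s : Cmul w s = s -> w <> C1 -> s = C0.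
Proof.
  destruct w as [a b], s as [x y]; unfold Cmul, C1, C0; simpl. intros E Hw.
  injection E as E1 E2.
  assert (Hpos : 0 < (a - 1) * (a - 1) + b * b).
  { pose proof (Rle_0_sqr (a - 1)); pose proof (Rle_0_sqr b); unfold Rsqr in *.
    destruct (Req_dec a 1) as [->|Ha].
    - destruct (Req_dec b 0) as [->|Hb]; [congruence|].
      pose proof (Rsqr_pos_lt b Hb); unfold Rsqr in *; lra.
    - assert (a - 1 <> 0) by lra.
      pose proof (Rsqr_pos_lt (a - 1) H1); unfold Rsqr in *; lra. }
  assert (Hx : ((a - 1) * (a - 1) + b * b) * x = 0).
  { replace (((a - 1) * (a - 1) + b * b) * x)
      with ((a - 1) * (a * x - b * y - x) + b * (a * y + b * x - y)) by ring.
    rewrite E1, E2; ring. }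
  assert (Hy : ((a - 1) * (a - 1) + b * b) * y = 0).
  { replace (((a - 1) * (a - 1) + b * b) * y)
      with ((a - 1) * (a * y + b * x - y) - b * (a * x - b * y - x)) by ring.
    rewrite E1, E2; ring. }
  apply Rmult_integral in Hx as [Hx | ->]; [lra|].
  apply Rmult_integral in Hy as [Hy | ->]; [lra|]. reflexivity.
Qed.

(* Multiplying the geometric sum by its ratio shifts it by one term, and the
   first and last terms agree. *)
Lemma Cexpi_mul_geometric_sum n th : Cexpi (INR n * th) = C1 ->
  Cmul (Cexpi th) (Csum n (fun k => Cexpi (INR k * th))) = Csum n (fun k => Cexpi (INR k * th)).
Proof.
  intros Hn. unfold Csum at 1. rewrite Cmul_Csum_list_l.
  fold (Csum n (fun k => Cmul (Cexpi th) (Cexpi (INR k * th)))).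
  rewrite (Csum_ext n _ (fun k => Cexpi (INR (S k) * th)))
    by (intros; rewrite Cexpi_add, S_INR; f_equal; ring).
  unfold Cexpi in Hn |- *. injection Hn as Hc Hs.
  apply Cpx_ext; rewrite ?Csum_fst, ?Csum_snd; cbn [fst snd].
  - rewrite (Rsum_shift n (fun k => cos (INR k * th))), Hc.
    simpl (INR 0); rewrite Rmult_0_l, cos_0; ring.
  - rewrite (Rsum_shift n (fun k => sin (INR k * th))), Hs.
    simpl (INR 0); rewrite Rmult_0_l, sin_0; ring.
Qed.

Lemma Csum_roots_of_unity n (r : Z) : (0 < n)%nat ->
  Csum n (fun k => Cexpi (2 * PI * INR k * IZR r / INR n)) =
  if Z.eqb (r mod Z.of_nat n) 0 then RtoC (INR n) else C0.
Proof.
  intros Hn. assert (HnR : 0 < INR n) by now apply lt_0_INR.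
  destruct (Z.eqb_spec (r mod Z.of_nat n) 0) as [E|E].
  - apply Z.mod_divide in E as [q ->]; [|lia].
    rewrite (Csum_ext n _ (fun _ => C1)).
    + apply Cpx_ext; rewrite ?Csum_fst, ?Csum_snd, Rsum_const; simpl; ring.
    + intros k _. rewrite <- Cexpi_2PI_IZR with (q := (Z.of_nat k * q)%Z).
      f_equal. rewrite !mult_IZR, <- !INR_IZR_INZ. field. lra.
  - set (th := 2 * PI * IZR r / INR n).
    rewrite (Csum_ext n _ (fun k => Cexpi (INR k * th)))
      by (intros; unfold th; f_equal; field; lra).
    apply Cmul_eq_self_C0 with (Cexpi th).
    + apply Cexpi_mul_geometric_sum. rewrite <- (Cexpi_2PI_IZR r).
      unfold th; f_equal; field; lra.
    + intros Hc. unfold th in Hc.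
      replace (2 * PI * IZR r / INR n) with (2 * PI * (IZR r / INR n)) in Hc by (field; lra).
      apply Cexpi_eq_C1 in Hc as [k Hk]. apply E.
      replace r with (k * Z.of_nat n)%Z by
        (apply eq_IZR; rewrite mult_IZR, <- INR_IZR_INZ, <- Hk; field; lra).
      apply Z.mod_mul. lia.
Qed.

Lemma mmul_assoc n A B C i j :
  mmul n (mmul n A B) C i j = mmul n A (mmul n B C) i j.
Proof.
  unfold mmul, Csum.
  rewrite (Csum_list_ext _
             (fun l => Csum_list (fun m => Cmul (A i m) (Cmul (B m l) (C l j))) (seq 0 n)))
    by (intros; rewrite Cmul_Csum_list_r; apply Csum_list_ext; intros; now rewrite Cmul_assoc).
  rewrite Csum_list_swap. apply Csum_list_ext; intros. now rewrite Cmul_Csum_list_l.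
Qed.

Lemma mmul_ext n A A' B B' i j :
  (forall k, (k < n)%nat -> A i k = A' i k /\ B k j = B' k j) ->
  mmul n A B i j = mmul n A' B' i j.
Proof. intros H. apply Csum_ext; intros k Hk. now destruct (H k Hk) as [-> ->]. Qed.

Lemma mmul_idm_l n A i j : (i < n)%nat -> mmul n idm A i j = A i j.
Proof.
  intros Hi. unfold mmul. rewrite (Csum_unique n _ i Hi).
  - unfold idm. rewrite Nat.eqb_refl. apply Cpx_ext; unfold Cmul, C1; simpl; ring.
  - intros k _ Hk. unfold idm. destruct (Nat.eqb_spec i k); [lia|].
    apply Cpx_ext; unfold Cmul, C0; simpl; ring.
Qed.

Lemma mmul_idm_r n A i j : (j < n)%nat -> mmul n A idm i j = A i j.
Proof.
  intros Hj. unfold mmul. rewrite (Csum_unique n _ j Hj).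
  - unfold idm. rewrite Nat.eqb_refl. apply Cpx_ext; unfold Cmul, C1; simpl; ring.
  - intros k _ Hk. unfold idm. destruct (Nat.eqb_spec k j); [lia|].
    apply Cpx_ext; unfold Cmul, C0; simpl; ring.
Qed.

Definition dft (n : nat) (f : nat -> Cpx) (r : Z) : Cpx :=
  Cmul (RtoC (/ INR n))
    (Csum n (fun k => Cmul (f k) (Cexpi (2 * PI * INR k * IZR r / INR n)))).

Lemma dft_ext n f g r : (forall k, f k = g k) -> dft n f r = dft n g r.
Proof. intros H. unfold dft. f_equal. apply Csum_ext; intros; now rewrite H. Qed.

Lemma dft_add n f g r :
  dft n (fun k => Cadd (f k) (g k)) r = Cadd (dft n f r) (dft n g r).
Proof.
  unfold dft.
  rewrite (Csum_ext n _ (fun k => Cadd (Cmul (f k) (Cexpi (2 * PI * INR k * IZR r / INR n)))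
                                   (Cmul (g k) (Cexpi (2 * PI * INR k * IZR r / INR n)))))
    by (intros; apply Cpx_ext; unfold Cadd, Cmul; simpl; ring).
  rewrite Csum_add. apply Cpx_ext; unfold Cadd, Cmul; simpl; ring.
Qed.

Lemma Cabs_dft_le n f r : (0 < n)%nat ->
  Cabs (dft n f r) <= / INR n * Rsum n (fun k => Cabs (f k)).
Proof.
  intros Hn. assert (Hinv : 0 < / INR n) by now apply Rinv_0_lt_compat, lt_0_INR.
  unfold dft. rewrite Cabs_mul, Cabs_RtoC, Rabs_pos_eq by lra.
  apply Rmult_le_compat_l; [lra|].
  eapply Rle_trans; [apply Cabs_Csum_list | apply Rsum_list_le]; intros.
  rewrite Cabs_mul, Cabs_Cexpi. lra.
Qed.

Lemma Cabs_dft_sub_le n f g r : (0 < n)%nat ->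
  Cabs (dft n f r) <= Cabs (dft n g r) + / INR n * Rsum n (fun k => Cabs (Csub (f k) (g k))).
Proof.
  intros Hn.
  rewrite (dft_ext n f (fun k => Cadd (g k) (Csub (f k) (g k))))
    by (intros; apply Cpx_ext; unfold Cadd, Csub; simpl; ring).
  rewrite dft_add. eapply Rle_trans; [apply Cabs_triang|].
  apply Rplus_le_compat_l. now apply Cabs_dft_le.
Qed.

Definition Fadj (n : nat) : mat :=
  fun k j => Cmul (RtoC (/ sqrt (INR n))) (Cexpi (2 * PI * INR k * INR j / INR n)).

Lemma Fmat_mul_Fadj_entry n i k j : (0 < n)%nat ->
  Cmul (Fmat n i k) (Fadj n k j) =
  Cmul (RtoC (/ INR n)) (Cexpi (2 * PI * INR k * IZR (Z.of_nat j - Z.of_nat i) / INR n)).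
Proof.
  intros Hn. assert (HnR : 0 < INR n) by now apply lt_0_INR.
  assert (Hs : / INR n = / sqrt (INR n) * / sqrt (INR n))
    by (rewrite <- Rinv_mult, sqrt_sqrt; lra).
  unfold Fmat, Fadj. apply Cpx_ext; unfold Cmul, RtoC, Cexpi; simpl;
  replace (2 * PI * INR k * IZR (Z.of_nat j - Z.of_nat i) / INR n) with
     (- (2 * PI * INR k * INR i / INR n) + 2 * PI * INR k * INR j / INR n)
     by (rewrite minus_IZR, <- !INR_IZR_INZ; field; lra);
  rewrite cos_plus, sin_plus, cos_neg, sin_neg, Hs; ring.
Qed.

Lemma Fmat_mul_Fadj n i j : (0 < n)%nat -> (i < n)%nat -> (j < n)%nat ->
  mmul n (Fmat n) (Fadj n) i j = idm i j.
Proof.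
  intros Hn Hi Hj. assert (HnR : 0 < INR n) by now apply lt_0_INR.
  unfold mmul. rewrite (Csum_ext n _ (fun k => Cmul (RtoC (/ INR n))
      (Cexpi (2 * PI * INR k * IZR (Z.of_nat j - Z.of_nat i) / INR n))))
    by (intros; now apply Fmat_mul_Fadj_entry).
  unfold Csum. rewrite <- Cmul_Csum_list_l. fold (Csum n (fun k =>
    Cexpi (2 * PI * INR k * IZR (Z.of_nat j - Z.of_nat i) / INR n))).
  rewrite Csum_roots_of_unity by auto. unfold idm.
  destruct (Nat.eqb_spec i j) as [->|Hij].
  - rewrite Z.sub_diag, Zmod_0_l. simpl. rewrite Cmul_RtoC, Rinv_l by lra. reflexivity.
  - replace ((Z.of_nat j - Z.of_nat i) mod Z.of_nat n =? 0)%Z with false.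
    + apply Cpx_ext; unfold Cmul, C0; simpl; ring.
    + symmetry. apply Z.eqb_neq. intros E. apply Z.mod_divide in E as [q Hq]; [|lia].
      destruct (Z.eq_dec q 0); nia.
Qed.

Lemma is_inverse_Fmat n Finv k j : (0 < n)%nat -> is_inverse n (Fmat n) Finv ->
  (k < n)%nat -> (j < n)%nat -> Finv k j = Fadj n k j.
Proof.
  intros Hn HI Hk Hj.
  rewrite <- (mmul_idm_r n Finv k j Hj), <- (mmul_idm_l n (Fadj n) k j Hk).
  transitivity (mmul n Finv (mmul n (Fmat n) (Fadj n)) k j).
  - apply mmul_ext; intros l Hl. split; [auto|]. symmetry; now apply Fmat_mul_Fadj.
  - rewrite <- mmul_assoc. apply mmul_ext; intros l Hl. split; [|auto].
    now apply HI.
Qed.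

Lemma FVFinv_entry n v z Finv i j : (0 < n)%nat -> is_inverse n (Fmat n) Finv ->
  (i < n)%nat -> (j < n)%nat ->
  mmul n (mmul n (Fmat n) (Vmat v z n)) Finv i j =
  dft n (fun k => v (latpt z n k)) (Z.of_nat j - Z.of_nat i).
Proof.
  intros Hn HI Hi Hj. unfold mmul at 1, dft, Csum. rewrite Cmul_Csum_list_l.
  apply Csum_ext. intros k Hk. rewrite (is_inverse_Fmat n Finv k j) by auto.
  assert (E : mmul n (Fmat n) (Vmat v z n) i k = Cmul (Fmat n i k) (v (latpt z n k))).
  { unfold mmul. rewrite (Csum_unique n _ k Hk).
    - unfold Vmat, diagm. now rewrite Nat.eqb_refl.
    - intros l _ Hl. unfold Vmat, diagm. destruct (Nat.eqb_spec l k); [lia|].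
      apply Cpx_ext; unfold Cmul, C0; simpl; ring. }
  rewrite E, (Cmul_comm (Fmat n i k)), <- Cmul_assoc, Fmat_mul_Fadj_entry by auto.
  rewrite !Cmul_assoc. f_equal. apply Cmul_comm.
Qed.
(** * Aliasing on the rank-1 lattice *)

Lemma dotZR_latpt (m z : list Z) n k : (0 < n)%nat ->
  exists Q : Z, dotZR m (latpt z n k) =
    (IZR (Z.of_nat k * dotZ m z) - IZR (Z.of_nat n) * IZR Q) / INR n.
Proof.
  intros Hn. assert (HnR : 0 < INR n) by now apply lt_0_INR.
  revert z. induction m as [|a m IH]; intros z.
  - exists 0%Z. unfold dotZR, dotZ, Rsum_list; simpl. rewrite Z.mul_0_r. field; lra.
  - destruct z as [|b z].
    + exists 0%Z. unfold dotZR, dotZ, latpt, Rsum_list; simpl. rewrite Z.mul_0_r. field; lra.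
    + destruct (IH z) as [Q HQ]. exists (a * ((Z.of_nat k * b) / Z.of_nat n) + Q)%Z.
      unfold dotZR, latpt, Rsum_list in *. simpl. rewrite HQ.
      unfold dotZ; simpl. fold (dotZ m z).
      rewrite Z.mod_eq by lia.
      repeat rewrite ?mult_IZR, ?plus_IZR, ?minus_IZR.
      rewrite <- !INR_IZR_INZ. field. lra.
Qed.

(* Indicator that the frequency [m] aliases to the discrete frequency [-r] on [Lambda(z,n)]. *)
Definition aliased (z : list Z) (n : nat) (m : list Z) (r : Z) : R :=
  if Z.eqb ((dotZ m z + r) mod Z.of_nat n) 0 then 1 else 0.

Lemma aliased_nonneg z n m r : 0 <= aliased z n m r.
Proof. unfold aliased. destruct (Z.eqb _ 0); lra. Qed.

Lemma dft_fourier_partial d c z n N r : (0 < n)%nat ->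
  dft n (fun k => fourier_partial d c (latpt z n k) N) r =
  Csum_list (fun m => Cmul (c m) (RtoC (aliased z n m r))) (box d N).
Proof.
  intros Hn. assert (HnR : 0 < INR n) by now apply lt_0_INR.
  unfold dft, fourier_partial, Csum.
  rewrite (Csum_list_ext _ (fun k => Csum_list (fun m =>
     Cmul (Cmul (c m) (Cexpi (2 * PI * dotZR m (latpt z n k))))
          (Cexpi (2 * PI * INR k * IZR r / INR n))) (box d N)))
    by (intros; apply Cmul_Csum_list_r).
  rewrite Csum_list_swap, Cmul_Csum_list_l. apply Csum_list_ext. intros m _.
  rewrite (Csum_list_ext _ (fun k => Cmul (c m)
      (Cexpi (2 * PI * INR k * IZR (dotZ m z + r) / INR n)))).
  - rewrite <- Cmul_Csum_list_l. fold (Csum n (fun k =>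
      Cexpi (2 * PI * INR k * IZR (dotZ m z + r) / INR n))).
    rewrite Csum_roots_of_unity by auto. unfold aliased.
    destruct (Z.eqb _ 0); apply Cpx_ext; unfold Cmul, RtoC, C0; simpl; field; lra.
  - intros k _. rewrite <- Cmul_assoc, Cexpi_add. f_equal.
    destruct (dotZR_latpt m z n k Hn) as [Q ->].
    rewrite <- (Cexpi_add_2PI_IZR _ Q). f_equal.
    rewrite plus_IZR, mult_IZR, <- !INR_IZR_INZ. field. lra.
Qed.

Lemma Cabs_dft_fourier_partial_le d c z n N r : (0 < n)%nat ->
  Cabs (dft n (fun k => fourier_partial d c (latpt z n k) N) r) <=
  Rsum_list (fun m => Cabs (c m) * aliased z n m r) (box d N).
Proof.
  intros Hn. rewrite dft_fourier_partial by auto.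
  eapply Rle_trans; [apply Cabs_Csum_list | apply Rsum_list_le]; intros.
  rewrite Cabs_mul, Cabs_RtoC, Rabs_pos_eq by apply aliased_nonneg. lra.
Qed.

Lemma mod_eq_0_lt_inj n (a b x x' : Z) : (0 < n)%nat ->
  (0 <= x < Z.of_nat n)%Z -> (0 <= x' < Z.of_nat n)%Z ->
  ((a + b * x) mod Z.of_nat n = 0)%Z -> ((a + b * x') mod Z.of_nat n = 0)%Z ->
  (b = 1 \/ b = -1)%Z -> x = x'.
Proof.
  intros Hn Hx Hx' E E' Hb.
  apply Z.mod_divide in E; [|lia]. apply Z.mod_divide in E'; [|lia].
  assert (Hd : (Z.of_nat n | b * (x - x'))%Z).
  { replace (b * (x - x'))%Z with ((a + b * x) - (a + b * x'))%Z by ring.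
    now apply Z.divide_sub_r. }
  destruct Hd as [q Hq]. destruct (Z.eq_dec q 0); nia.
Qed.

Lemma Rsum_aliased_row_le_1 z n m i : (0 < n)%nat ->
  Rsum n (fun j => aliased z n m (Z.of_nat j - Z.of_nat i)) <= 1.
Proof.
  intros Hn. apply Rsum_indicator_le_1.
  intros j j' Hj Hj' E E'. apply Z.eqb_eq in E, E'.
  apply Nat2Z.inj, (mod_eq_0_lt_inj n (dotZ m z - Z.of_nat i) 1); auto; try lia;
  [rewrite <- E | rewrite <- E']; f_equal; ring.
Qed.

Lemma Rsum_aliased_col_le_1 z n m j : (0 < n)%nat ->
  Rsum n (fun i => aliased z n m (Z.of_nat j - Z.of_nat i)) <= 1.
Proof.
  intros Hn. apply Rsum_indicator_le_1.
  intros i i' Hi Hi' E E'. apply Z.eqb_eq in E, E'.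
  apply Nat2Z.inj, (mod_eq_0_lt_inj n (dotZ m z + Z.of_nat j) (-1)); auto; try lia;
  [rewrite <- E | rewrite <- E']; f_equal; ring.
Qed.
(** * Summability of Korobov coefficients against polynomial weights *)

Lemma cauchy_schwarz_step X Y C A B : 0 <= A -> 0 <= B -> C * C <= A * B ->
  (X * Y + C) * (X * Y + C) <= (X * X + A) * (Y * Y + B).
Proof.
  intros HA HB HC.
  enough (2 * X * Y * C <= X * X * B + Y * Y * A) by nra.
  destruct (Req_dec A 0) as [->|HA0].
  - assert (C = 0) by nra. subst C. nra.
  - assert (A * (X * X * B + Y * Y * A - 2 * X * Y * C) =
              (Y * A - X * C) * (Y * A - X * C) + X * X * (A * B - C * C)) by ring.
    assert (0 <= (Y * A - X * C) * (Y * A - X * C) + X * X * (A * B - C * C))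
      by (pose proof (Rle_0_sqr (Y * A - X * C)); pose proof (Rle_0_sqr X);
          unfold Rsqr in *; nra).
    enough (0 <= X * X * B + Y * Y * A - 2 * X * Y * C) by lra.
    apply (Rmult_le_reg_l A); lra.
Qed.

Lemma cauchy_schwarz_list {A} (a b : A -> R) l :
  Rsum_list (fun x => a x * b x) l * Rsum_list (fun x => a x * b x) l <=
  Rsum_list (fun x => a x * a x) l * Rsum_list (fun x => b x * b x) l.
Proof.
  induction l as [|x l IH]; [unfold Rsum_list; simpl; lra|].
  apply cauchy_schwarz_step; auto; apply Rsum_list_nonneg; intros; nra.
Qed.

Lemma cauchy_schwarz_weighted {A} (c g w : A -> R) l : (forall x, 0 < w x) ->
  Rsum_list (fun x => c x * g x) l <=
  sqrt (Rsum_list (fun x => c x * c x * w x) l) * sqrt (Rsum_list (fun x => g x * g x / w x) l).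
Proof.
  intros Hw. assert (Hsw : forall x, 0 < sqrt (w x)) by (intros; now apply sqrt_lt_R0).
  assert (Hww : forall x, sqrt (w x) * sqrt (w x) = w x) by (intros; apply sqrt_sqrt, Rlt_le, Hw).
  set (a := fun x => c x * sqrt (w x)).
  set (b := fun x => g x / sqrt (w x)).
  rewrite (Rsum_list_ext _ (fun x => a x * b x))
    by (intros; unfold a, b; field; specialize (Hsw x); lra).
  rewrite (Rsum_list_ext (fun x => c x * c x * w x) (fun x => a x * a x))
    by (intros; unfold a; rewrite <- (Hww x) at 1; ring).
  rewrite (Rsum_list_ext (fun x => g x * g x / w x) (fun x => b x * b x))
    by (intros; unfold b; rewrite <- (Hww x) at 1; field; specialize (Hsw x); lra).
  rewrite <- sqrt_mult_alt by (apply Rsum_list_nonneg; intros; nra).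
  eapply Rle_trans; [apply RRle_abs|].
  rewrite <- (sqrt_square (Rabs _)) by apply Rabs_pos.
  apply sqrt_le_1_alt. rewrite <- Rabs_mult, Rabs_pos_eq by nra.
  apply cauchy_schwarz_list.
Qed.

Lemma kfactor_ge_1 alpha a : 1 <= kfactor alpha a.
Proof. unfold kfactor. destruct (Z.eqb a 0); [lra | apply Rmax_r]. Qed.

Lemma kweight_ge_1 alpha m : 1 <= kweight alpha m.
Proof.
  induction m; unfold kweight in *; simpl; [lra|].
  pose proof (kfactor_ge_1 alpha a). nra.
Qed.

Lemma normsqZ_nonneg m : 0 <= normsqZ m.
Proof. unfold normsqZ. apply Rsum_list_nonneg; intros; nra. Qed.

Definition prodZ (phi : Z -> R) (m : list Z) : R := fold_right Rmult 1 (map phi m).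

Lemma Rsum_box_prodZ phi d N :
  Rsum_list (prodZ phi) (box d N) = Rsum_list phi (zrange N) ^ d.
Proof.
  induction d; cbn [box pow]; [unfold Rsum_list, prodZ; simpl; ring|].
  rewrite Rsum_list_flat_map.
  rewrite (Rsum_list_ext _ (fun a => Rsum_list phi (zrange N) ^ d * phi a)).
  - rewrite Rsum_list_scal. ring.
  - intros a _. rewrite Rsum_list_map, <- IHd, Rmult_comm, <- Rsum_list_scal.
    apply Rsum_list_ext; intros; unfold prodZ; simpl; ring.
Qed.

Definition korobov_ratio (alpha : R) (q : nat) (a : Z) : R :=
  (1 + 2 * (IZR a * IZR a)) ^ q / kfactor alpha a.

Lemma korobov_ratio_nonneg alpha q a : 0 <= korobov_ratio alpha q a.
Proof.
  unfold korobov_ratio. pose proof (kfactor_ge_1 alpha a).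
  apply Rle_mult_inv_pos; [apply pow_le; nra | lra].
Qed.

(* Uses [1 + 2 (a + s) <= (1 + 2 a) (1 + 2 s)] for [a, s >= 0]. *)
Lemma moment_div_kweight_le alpha q m :
  (1 + 2 * normsqZ m) ^ q / kweight alpha m <= prodZ (korobov_ratio alpha q) m.
Proof.
  induction m as [|a m IH]; unfold prodZ in *; simpl.
  - unfold normsqZ, kweight, Rsum_list; simpl.
    rewrite Rmult_0_r, Rplus_0_r, pow1. lra.
  - unfold normsqZ in *. unfold kweight in *. simpl.
    change (Rsum_list (fun a0 : Z => IZR a0 * IZR a0) (a :: m))
      with (IZR a * IZR a + Rsum_list (fun a0 : Z => IZR a0 * IZR a0) m).
    set (s := Rsum_list (fun a0 : Z => IZR a0 * IZR a0) m) in *.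
    set (w := fold_right Rmult 1 (map (kfactor alpha) m)) in *.
    assert (Hs : 0 <= s) by (apply Rsum_list_nonneg; intros; nra).
    assert (Hw : 1 <= w) by apply (kweight_ge_1 alpha m).
    pose proof (kfactor_ge_1 alpha a). pose proof (korobov_ratio_nonneg alpha q a).
    apply Rle_trans with (korobov_ratio alpha q a * ((1 + 2 * s) ^ q / w));
      [|now apply Rmult_le_compat_l].
    unfold korobov_ratio, Rdiv. rewrite Rinv_mult.
    replace ((1 + 2 * (IZR a * IZR a)) ^ q * / kfactor alpha a * ((1 + 2 * s) ^ q * / w))
      with ((1 + 2 * (IZR a * IZR a)) ^ q * (1 + 2 * s) ^ q * (/ kfactor alpha a * / w)) by ring.
    apply Rmult_le_compat_r.
    + apply Rmult_le_pos; left; apply Rinv_0_lt_compat; lra.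
    + rewrite <- Rpow_mult_distr. apply pow_incr. nra.
Qed.

Lemma korobov_ratio_le alpha q (a : Z) : (a <> 0)%Z ->
  korobov_ratio alpha q a <= 3 ^ q / Rpower (IZR (Z.abs a)) (2 * alpha - INR (2 * q)).
Proof.
  intros Ha. set (A := IZR (Z.abs a)).
  assert (HA : 1 <= A) by (unfold A; apply IZR_le; lia).
  assert (Hsq : IZR a * IZR a = A * A)
    by (unfold A; rewrite abs_IZR, <- Rabs_mult, Rabs_pos_eq; nra).
  unfold korobov_ratio, kfactor. apply Z.eqb_neq in Ha. rewrite Ha.
  assert (Hp : 0 < Rpower A (2 * alpha)) by apply exp_pos.
  apply Rle_trans with ((3 * (A * A)) ^ q / Rpower A (2 * alpha)).
  - unfold Rdiv. apply Rmult_le_compat.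
    + apply pow_le. nra.
    + left; apply Rinv_0_lt_compat, Rlt_le_trans with (Rpower A (2 * alpha)); auto.
      apply Rmax_l.
    + apply pow_incr. rewrite Hsq. nra.
    + apply Rinv_le_contravar; auto. apply Rmax_l.
  - rewrite Rpow_mult_distr, <- pow_sqr, <- (Rpower_pow (2 * q) A) by lra.
    unfold Rminus. rewrite Rpower_plus, Rpower_Ropp.
    assert (0 < Rpower A (INR (2 * q))) by apply exp_pos.
    right. field. lra.
Qed.

Lemma Rpower_telescope x t : 1 <= x -> 0 < t ->
  t / Rpower (x + 1) (t + 1) <= Rpower x (- t) - Rpower (x + 1) (- t).
Proof.
  intros Hx Ht. set (a := x + 1). assert (Ha : 0 < a) by (unfold a; lra).
  unfold Rpower.
  assert (Hl : 1 / a <= ln a - ln x).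
  { pose proof (exp_ineq1_le (ln x - ln a)) as H.
    unfold Rminus in H. rewrite exp_plus, exp_Ropp, !exp_ln in H by lra.
    unfold a in *. replace (x * / (x + 1)) with (1 - 1 / (x + 1)) in H by (field; lra). lra. }
  assert (E : exp (- t * ln x) = exp (- t * ln a) * exp (t * (ln a - ln x)))
    by (rewrite <- exp_plus; f_equal; ring).
  assert (E2 : exp ((t + 1) * ln a) = exp (t * ln a) * a).
  { replace ((t + 1) * ln a) with (t * ln a + ln a) by ring. rewrite exp_plus, exp_ln; lra. }
  assert (E3 : exp (- t * ln a) = / exp (t * ln a)) by (rewrite <- exp_Ropp; f_equal; ring).
  pose proof (exp_ineq1_le (t * (ln a - ln x))).
  pose proof (exp_pos (t * ln a)).
  rewrite E, E2, E3.
  apply Rle_trans with (/ exp (t * ln a) * (t * (ln a - ln x))).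
  - replace (t / (exp (t * ln a) * a)) with (/ exp (t * ln a) * (t * (1 / a))) by (field; lra).
    apply Rmult_le_compat_l; [left; now apply Rinv_0_lt_compat|].
    apply Rmult_le_compat_l; lra.
  - assert (/ exp (t * ln a) * (t * (ln a - ln x)) <=
            / exp (t * ln a) * (exp (t * (ln a - ln x)) - 1))
      by (apply Rmult_le_compat_l; [left; now apply Rinv_0_lt_compat | lra]).
    lra.
Qed.

Lemma p_series_bounded s : 1 < s ->
  forall N, Rsum N (fun k => / Rpower (INR (S k)) s) <= 1 + / (s - 1).
Proof.
  intros Hs. set (t := s - 1). assert (Ht : 0 < t) by (unfold t; lra).
  assert (Hpos : forall N, 0 < Rpower (INR (S N)) (- t)) by (intros; apply exp_pos).
  assert (Inv : forall N, Rsum (S N) (fun k => / Rpower (INR (S k)) s) <=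
                          1 + / t - / t * Rpower (INR (S N)) (- t)).
  { induction N.
    - unfold Rsum, Rsum_list; simpl. unfold Rpower.
      rewrite ln_1, !Rmult_0_r, exp_0. lra.
    - rewrite Rsum_S.
      pose proof (Rpower_telescope (INR (S N)) t) as H.
      rewrite <- S_INR in H. replace (t + 1) with s in H by (unfold t; ring).
      assert (H1 : 1 <= INR (S N)) by (rewrite S_INR; pose proof (pos_INR N); lra).
      specialize (H H1 Ht).
      assert (/ Rpower (INR (S (S N))) s <=
              / t * (Rpower (INR (S N)) (- t) - Rpower (INR (S (S N))) (- t))).
      { apply (Rmult_le_reg_l t); auto. rewrite <- Rmult_assoc, Rinv_r by lra. lra. }
      lra. }
  intros [|N].
  - unfold Rsum, Rsum_list; simpl. pose proof (Rinv_0_lt_compat t Ht). fold t. lra.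
  - specialize (Inv N). specialize (Hpos N). fold t.
    pose proof (Rinv_0_lt_compat t Ht). nra.
Qed.

Lemma Rsum_list_zrange f N :
  Rsum_list f (zrange N) = f 0%Z + Rsum N (fun k => f (Z.of_nat (S k)) + f (- Z.of_nat (S k))%Z).
Proof.
  induction N.
  - unfold zrange, Rsum, Rsum_list; simpl. ring.
  - rewrite Rsum_S, <- Rplus_assoc, <- IHN.
    unfold zrange. replace (2 * S N + 1)%nat with (S (S (2 * N + 1))) by lia.
    rewrite seq_S. cbn [seq].
    rewrite <- seq_shift, map_app, Rsum_list_app. cbn [map].
    rewrite map_map. unfold Rsum_list; cbn [map fold_right].
    replace (Z.of_nat 0 - Z.of_nat (S N))%Z with (- Z.of_nat (S N))%Z by lia.
    replace (Z.of_nat (0 + S (2 * N + 1)) - Z.of_nat (S N))%Z with (Z.of_nat (S N)) by lia.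
    rewrite (map_ext (fun x : nat => (Z.of_nat (S x) - Z.of_nat (S N))%Z)
                     (fun k : nat => (Z.of_nat k - Z.of_nat N)%Z)) by (intros; lia).
    ring.
Qed.

Lemma Rsum_zrange_korobov_ratio_bounded alpha q : 1 < 2 * alpha - INR (2 * q) ->
  exists C, forall N, Rsum_list (korobov_ratio alpha q) (zrange N) <= C.
Proof.
  intros Hs. set (s := 2 * alpha - INR (2 * q)) in *.
  exists (1 + 2 * 3 ^ q * (1 + / (s - 1))). intros N.
  rewrite Rsum_list_zrange.
  assert (H0 : korobov_ratio alpha q 0 = 1).
  { unfold korobov_ratio, kfactor; simpl. rewrite Rmult_0_l, Rmult_0_r, Rplus_0_r, pow1. field. }
  assert (Hk : forall k, korobov_ratio alpha q (Z.of_nat (S k)) +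
                         korobov_ratio alpha q (- Z.of_nat (S k)) <=
                         2 * 3 ^ q * / Rpower (INR (S k)) s).
  { intros k.
    pose proof (korobov_ratio_le alpha q (Z.of_nat (S k)) ltac:(lia)) as H1.
    pose proof (korobov_ratio_le alpha q (- Z.of_nat (S k)) ltac:(lia)) as H2.
    rewrite Z.abs_eq, <- INR_IZR_INZ in H1 by lia.
    rewrite Z.abs_neq, Z.opp_involutive, <- INR_IZR_INZ in H2 by lia.
    fold s in H1, H2. unfold Rdiv in H1, H2. lra. }
  rewrite H0. apply Rplus_le_compat_l.
  eapply Rle_trans; [apply Rsum_le; intros k _; apply Hk|].
  unfold Rsum. rewrite Rsum_list_scal. fold (Rsum N (fun k => / Rpower (INR (S k)) s)).
  apply Rmult_le_compat_l; [pose proof (pow_lt 3 q); lra|].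
  now apply p_series_bounded.
Qed.

Lemma korobov_moment_bounded d alpha c p : korobov d alpha c ->
  1 < 2 * alpha - INR (2 * (2 * p)) ->
  exists S0, 0 <= S0 /\ forall N,
    Rsum_list (fun m => Cabs (c m) * (1 + 2 * normsqZ m) ^ p) (box d N) <= S0.
Proof.
  intros [M HM] Hs. destruct (Rsum_zrange_korobov_ratio_bounded alpha (2 * p) Hs) as [C HC].
  exists (sqrt M * sqrt (C ^ d)). split; [apply Rmult_le_pos; apply sqrt_pos|].
  intros N.
  eapply Rle_trans.
  { apply (cauchy_schwarz_weighted (fun m => Cabs (c m)) (fun m => (1 + 2 * normsqZ m) ^ p)
             (kweight alpha)).
    intros; pose proof (kweight_ge_1 alpha x); lra. }
  apply Rmult_le_compat; try apply sqrt_pos; apply sqrt_le_1_alt.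
  - eapply Rle_trans; [|apply (HM N)]. right; apply Rsum_list_ext; intros.
    now rewrite Cabs_sqr.
  - eapply Rle_trans with (Rsum_list (prodZ (korobov_ratio alpha (2 * p))) (box d N)).
    + apply Rsum_list_le; intros m _.
      rewrite <- pow_add. replace (p + p)%nat with (2 * p)%nat by lia.
      apply moment_div_kweight_le.
    + rewrite Rsum_box_prodZ. apply pow_incr. split; [|auto].
      apply Rsum_list_nonneg; intros; apply korobov_ratio_nonneg.
Qed.

Definition addZ (a b : list Z) : list Z := map (fun p => (fst p + snd p)%Z) (combine a b).

Lemma addZ_length a b : length (addZ a b) = Nat.min (length a) (length b).
Proof. unfold addZ. now rewrite length_map, length_combine. Qed.

Lemma normsqZ_addZ_le a b : normsqZ (addZ a b) <= 2 * normsqZ a + 2 * normsqZ b.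
Proof.
  revert b; induction a as [|x a IH]; intros b.
  - pose proof (normsqZ_nonneg b). unfold addZ, normsqZ, Rsum_list in *; simpl in *. lra.
  - destruct b as [|y b].
    + pose proof (normsqZ_nonneg (x :: a)). unfold addZ, normsqZ, Rsum_list in *; simpl in *. lra.
    + specialize (IH b). unfold addZ, normsqZ, Rsum_list in *; simpl in *.
      rewrite plus_IZR. pose proof (Rle_0_sqr (IZR x - IZR y)). unfold Rsqr in *. nra.
Qed.

Lemma dotZ_addZ a b z : length a = length z -> length b = length z ->
  dotZ (addZ a b) z = (dotZ a z + dotZ b z)%Z.
Proof.
  revert b z; induction a as [|x a IH]; intros b z Ha Hb;
    destruct z as [|w z]; destruct b as [|y b]; simpl in *; try lia; auto.
  unfold addZ, dotZ in *. simpl. rewrite IH by lia. lia.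
Qed.

Lemma minimal_aa_set_normsqZ_diff d z n h m i j : (0 < n)%nat -> minimal_aa_set d z n h ->
  (i < n)%nat -> (j < n)%nat -> length m = d -> length z = d ->
  aliased z n m (Z.of_nat j - Z.of_nat i) = 1 ->
  Rabs (normsqZ (h i) - normsqZ (h j)) <= (1 + normsqZ (h j)) * (1 + 2 * normsqZ m).
Proof.
  intros Hn [Hcl [_ Hmin]] Hi Hj Hm Hz Hal.
  unfold aliased in Hal.
  destruct (Z.eqb_spec ((dotZ m z + (Z.of_nat j - Z.of_nat i)) mod Z.of_nat n) 0) as [E|E];
    [|lra].
  destruct (Hcl j Hj) as [Hlj Hcj].
  assert (Hcong : congr (addZ (h j) m) z n i).
  { unfold congr in *. rewrite dotZ_addZ by lia.
    apply Z.mod_divide in E; [|lia]. apply Z.mod_divide in Hcj; [|lia].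
    apply Z.mod_divide; [lia|].
    replace (dotZ (h j) z + dotZ m z - Z.of_nat i)%Z with
      ((dotZ (h j) z - Z.of_nat j) + (dotZ m z + (Z.of_nat j - Z.of_nat i)))%Z by lia.
    now apply Z.divide_add_r. }
  pose proof (Hmin i (addZ (h j) m) Hi ltac:(rewrite addZ_length; lia) Hcong) as Hle.
  unfold norm2Z in Hle. apply sqrt_le_0 in Hle; try apply normsqZ_nonneg.
  pose proof (normsqZ_addZ_le (h j) m).
  pose proof (normsqZ_nonneg (h i)). pose proof (normsqZ_nonneg (h j)).
  pose proof (normsqZ_nonneg m).
  apply Rabs_le. split; nra.
Qed.

Definition Ddiag (gamma : R) (h : nat -> list Z) (i : nat) : R :=
  gamma / 2 * (4 * PI ^ 2 * norm2Z (h i) ^ 2).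

Lemma Ddiag_nonneg gamma h i : 0 < gamma -> 0 <= Ddiag gamma h i.
Proof.
  intros Hg. unfold Ddiag. pose proof PI_RGT_0.
  apply Rmult_le_pos; [lra|]. apply Rmult_le_pos; [|apply pow2_ge_0].
  pose proof (pow_le PI 2). lra.
Qed.

Lemma Ddiag_diff_le gamma d z n h m i j : 0 < gamma -> (0 < n)%nat ->
  minimal_aa_set d z n h -> (i < n)%nat -> (j < n)%nat -> length m = d -> length z = d ->
  aliased z n m (Z.of_nat j - Z.of_nat i) = 1 ->
  Rabs (Ddiag gamma h i - Ddiag gamma h j) <=
  (1 + 2 * gamma * PI ^ 2) * (1 + Ddiag gamma h j) * (1 + 2 * normsqZ m).
Proof.
  intros Hg Hn Hmin Hi Hj Hm Hz Hal.
  pose proof (minimal_aa_set_normsqZ_diff d z n h m i j Hn Hmin Hi Hj Hm Hz Hal) as H.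
  assert (Hsq : forall l, norm2Z l ^ 2 = normsqZ l) by (intros; apply pow2_sqrt, normsqZ_nonneg).
  unfold Ddiag. rewrite !Hsq.
  set (k := 2 * gamma * PI ^ 2).
  assert (Hk : 0 < k) by (unfold k; pose proof PI_RGT_0; pose proof (pow_lt PI 2); nra).
  replace (gamma / 2 * (4 * PI ^ 2 * normsqZ (h i)) - gamma / 2 * (4 * PI ^ 2 * normsqZ (h j)))
    with (k * (normsqZ (h i) - normsqZ (h j))) by (unfold k; field).
  replace (gamma / 2 * (4 * PI ^ 2 * normsqZ (h j))) with (k * normsqZ (h j)) by (unfold k; field).
  rewrite Rabs_mult, (Rabs_pos_eq k) by lra.
  pose proof (normsqZ_nonneg (h j)). pose proof (normsqZ_nonneg m).
  apply Rle_trans with (k * ((1 + normsqZ (h j)) * (1 + 2 * normsqZ m))).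
  - apply Rmult_le_compat_l; lra.
  - rewrite <- Rmult_assoc. apply Rmult_le_compat_r; nra.
Qed.

(** * The Schur test *)

Lemma Rsum_cauchy_schwarz_weighted n (K w : nat -> R) : (forall j, (j < n)%nat -> 0 <= K j) ->
  Rsum n (fun j => K j * w j) * Rsum n (fun j => K j * w j) <=
  Rsum n K * Rsum n (fun j => K j * (w j * w j)).
Proof.
  intros HK.
  pose proof (cauchy_schwarz_list (fun j => sqrt (K j)) (fun j => sqrt (K j) * w j) (seq 0 n)) as H.
  assert (Hs : forall x, In x (seq 0 n) -> sqrt (K x) * sqrt (K x) = K x)
    by (intros x Hx; apply in_seq in Hx; apply sqrt_sqrt, HK; lia).
  unfold Rsum. cbv beta in H.
  rewrite (Rsum_list_ext (fun x => sqrt (K x) * (sqrt (K x) * w x)) (fun j => K j * w j)),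
    (Rsum_list_ext (fun x => sqrt (K x) * sqrt (K x)) K),
    (Rsum_list_ext (fun x => sqrt (K x) * w x * (sqrt (K x) * w x)) (fun j => K j * (w j * w j)))
    in H; auto; intros x Hx; specialize (Hs x Hx);
    set (r := sqrt (K x)) in *; rewrite <- Hs; ring.
Qed.

Lemma schur_test n (K : nat -> nat -> R) (w : nat -> R) M :
  0 <= M ->
  (forall i j, (i < n)%nat -> (j < n)%nat -> 0 <= K i j) ->
  (forall i, (i < n)%nat -> Rsum n (fun j => K i j) <= M) ->
  (forall j, (j < n)%nat -> Rsum n (fun i => K i j) <= M) ->
  Rsum n (fun i => Rsum n (fun j => K i j * w j) * Rsum n (fun j => K i j * w j)) <=
  M * M * Rsum n (fun j => w j * w j).
Proof.
  intros HM HK Hrow Hcol.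
  eapply Rle_trans with (Rsum n (fun i => M * Rsum n (fun j => K i j * (w j * w j)))).
  { apply Rsum_le; intros i Hi. eapply Rle_trans.
    - apply Rsum_cauchy_schwarz_weighted; auto.
    - apply Rmult_le_compat_r; auto. apply Rsum_nonneg; intros; apply Rmult_le_pos; auto; nra. }
  rewrite Rsum_scal, Rsum_swap, Rmult_assoc. apply Rmult_le_compat_l; auto.
  rewrite <- Rsum_scal. apply Rsum_le; intros j Hj.
  rewrite (Rsum_ext n _ (fun i => (w j * w j) * K i j)) by (intros; ring).
  rewrite Rsum_scal, Rmult_comm. apply Rmult_le_compat_r; [nra | auto].
Qed.
Lemma le_epsilon_mul x y c : 0 <= c ->
  (forall eps, 0 < eps -> eps <= 1 -> x <= y + eps * c) -> x <= y.
Proof.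
  intros Hc H. apply le_epsilon. intros del Hdel.
  set (e := Rmin 1 (del / (c + 1))).
  assert (He1 : e <= 1) by apply Rmin_l.
  assert (He2 : e <= del / (c + 1)) by apply Rmin_r.
  assert (He0 : 0 < e) by (apply Rmin_glb_lt; [lra | apply Rdiv_lt_0_compat; lra]).
  specialize (H e He0 He1).
  assert (e * (c + 1) <= del).
  { apply (Rmult_le_compat_r (c + 1)) in He2; [|lra].
    unfold Rdiv in He2. rewrite Rmult_assoc, Rinv_l, Rmult_1_r in He2 by lra. lra. }
  nra.
Qed.

Lemma sqr_le_of_le_plus_eps x s t eps : 0 <= x -> 0 <= s -> 0 <= t -> 0 < eps -> eps <= 1 ->
  x <= s + eps * t -> x * x <= (1 + eps) * (s * s) + 2 * eps * (t * t).
Proof.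
  intros Hx Hs Ht He He1 Hle.
  assert (x * x <= (s + eps * t) * (s + eps * t)) by (apply Rmult_le_compat; auto).
  assert (2 * (s * t) <= s * s + t * t) by (pose proof (Rle_0_sqr (s - t)); unfold Rsqr in *; nra).
  assert (eps * eps * (t * t) <= eps * (t * t)) by (apply Rmult_le_compat_r; nra).
  assert (eps * (2 * (s * t)) <= eps * (s * s + t * t)) by (apply Rmult_le_compat_l; lra).
  nra.
Qed.

(* [v] is only known as the pointwise limit of its Fourier series, so [|W|] is
   bounded by truncated aliasing kernels [K] only up to an error [eps * e]. *)
Lemma schur_test_approx n (a e : nat -> nat -> R) (b u : nat -> R) M :
  0 <= M ->
  (forall i j, (i < n)%nat -> (j < n)%nat -> 0 <= a i j /\ 0 <= e i j) ->
  (forall j, (j < n)%nat -> 0 <= b j /\ 0 <= u j) ->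
  (forall eps, 0 < eps -> exists K : nat -> nat -> R,
     (forall i j, (i < n)%nat -> (j < n)%nat -> 0 <= K i j) /\
     (forall i, (i < n)%nat -> Rsum n (fun j => K i j) <= M) /\
     (forall j, (j < n)%nat -> Rsum n (fun i => K i j) <= M) /\
     (forall i j, (i < n)%nat -> (j < n)%nat -> a i j <= K i j * b j + eps * e i j)) ->
  Rsum n (fun i => Rsum n (fun j => a i j * u j) * Rsum n (fun j => a i j * u j)) <=
  M * M * Rsum n (fun j => (b j * u j) * (b j * u j)).
Proof.
  intros HM Hae Hbu H.
  set (W := Rsum n (fun j => (b j * u j) * (b j * u j))).
  set (t := fun i => Rsum n (fun j => e i j * u j)).
  set (T := Rsum n (fun i => t i * t i)).
  assert (HW : 0 <= W) by (apply Rsum_nonneg; intros; nra).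
  assert (HT : 0 <= T) by (apply Rsum_nonneg; intros; nra).
  assert (Ht : forall i, (i < n)%nat -> 0 <= t i).
  { intros i Hi; apply Rsum_nonneg; intros j Hj.
    destruct (Hae i j Hi Hj), (Hbu j Hj). now apply Rmult_le_pos. }
  apply le_epsilon_mul with (M * M * W + 2 * T); [pose proof (Rmult_le_pos M M HM HM); nra|].
  intros eps He0 He1. destruct (H eps He0) as [K [HK0 [HKr [HKc HaK]]]].
  set (s := fun i => Rsum n (fun j => K i j * (b j * u j))).
  assert (Hs : forall i, (i < n)%nat -> 0 <= s i).
  { intros i Hi; apply Rsum_nonneg; intros j Hj. destruct (Hbu j Hj).
    apply Rmult_le_pos; auto. now apply Rmult_le_pos. }
  assert (Hsum : Rsum n (fun i => s i * s i) <= M * M * W)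
    by (apply schur_test; auto).
  eapply Rle_trans with (Rsum n (fun i => (1 + eps) * (s i * s i) + 2 * eps * (t i * t i))).
  - apply Rsum_le; intros i Hi. apply sqr_le_of_le_plus_eps; auto.
    + apply Rsum_nonneg; intros j Hj. destruct (Hae i j Hi Hj), (Hbu j Hj).
      now apply Rmult_le_pos.
    + unfold s, t. rewrite <- Rsum_scal, <- Rsum_plus. apply Rsum_le; intros j Hj.
      destruct (Hbu j Hj) as [_ Hu].
      apply Rle_trans with ((K i j * b j + eps * e i j) * u j).
      * apply Rmult_le_compat_r; auto.
      * right; ring.
  - rewrite Rsum_plus, !Rsum_scal. fold T.
    assert (0 <= Rsum n (fun i => s i * s i)) by (apply Rsum_nonneg; intros; nra).
    nra.
Qed.

Lemma vnorm_le_of_Rsum_sqr n (x x' : cvec) c : 0 <= c ->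
  Rsum n (fun i => Cmod2 (x i)) <= c * c * Rsum n (fun i => Cmod2 (x' i)) ->
  vnorm n x <= c * vnorm n x'.
Proof.
  intros Hc H. unfold vnorm.
  rewrite <- (sqrt_square c), <- sqrt_mult_alt by nra.
  now apply sqrt_le_1_alt.
Qed.

Lemma Cabs_mvec_realvec_le n A y i :
  Cabs (mvec n A (realvec y) i) <= Rsum n (fun j => Cabs (A i j) * Rabs (y j)).
Proof.
  eapply Rle_trans; [apply Cabs_Csum_list | apply Rsum_list_le]; intros.
  rewrite Cabs_mul. unfold realvec. rewrite Cabs_RtoC. lra.
Qed.

Lemma mvec_diag n E e y i : (i < n)%nat ->
  (forall j, (j < n)%nat -> E i j = if Nat.eqb i j then RtoC (e i) else C0) ->
  mvec n E y i = Cmul (RtoC (e i)) (y i).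
Proof.
  intros Hi HE. unfold mvec. rewrite (Csum_unique n _ i Hi).
  - now rewrite HE, Nat.eqb_refl.
  - intros k Hk Hne. rewrite HE by auto. destruct (Nat.eqb_spec i k); [lia|].
    apply Cpx_ext; unfold Cmul, C0; simpl; ring.
Qed.

Lemma Un_cv_finite_uniform (V : nat -> Cpx) (P : nat -> nat -> Cpx) n :
  (forall k, (k < n)%nat -> Un_cv (fun N => fst (P N k)) (fst (V k)) /\
                           Un_cv (fun N => snd (P N k)) (snd (V k))) ->
  forall eps, 0 < eps -> exists N0, forall N, (N >= N0)%nat -> forall k, (k < n)%nat ->
    Cabs (Csub (V k) (P N k)) <= eps.
Proof.
  induction n; intros H eps He; [exists 0%nat; intros; lia|].
  destruct (IHn ltac:(intros; apply H; lia) eps He) as [N1 HN1].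
  destruct (H n ltac:(lia)) as [H1 H2].
  destruct (H1 (eps / 2) ltac:(lra)) as [N2 HN2].
  destruct (H2 (eps / 2) ltac:(lra)) as [N3 HN3].
  exists (N1 + N2 + N3)%nat. intros N HN k Hk.
  destruct (Nat.eq_dec k n) as [->|]; [|apply HN1; lia].
  eapply Rle_trans; [apply Cabs_le_Rabs_fst_snd|]. unfold Csub; simpl.
  specialize (HN2 N ltac:(lia)); specialize (HN3 N ltac:(lia)). unfold Rdist in *.
  rewrite (Rabs_minus_sym (fst (V n))), (Rabs_minus_sym (snd (V n))). lra.
Qed.

Definition alias_kernel (d : nat) (c : list Z -> Cpx) (z : list Z) (n N p i j : nat) : R :=
  Rsum_list (fun m => Cabs (c m) * (1 + 2 * normsqZ m) ^ p *
                      aliased z n m (Z.of_nat j - Z.of_nat i)) (box d N).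

Lemma alias_kernel_nonneg d c z n N p i j : 0 <= alias_kernel d c z n N p i j.
Proof.
  apply Rsum_list_nonneg; intros m _. pose proof (normsqZ_nonneg m).
  repeat apply Rmult_le_pos; auto using Cabs_nonneg, aliased_nonneg. apply pow_le; lra.
Qed.

Lemma Rsum_Rsum_list_indicator_le {A} n (f : A -> R) (al : nat -> A -> R) l :
  (forall x, In x l -> 0 <= f x) -> (forall x, Rsum n (fun j => al j x) <= 1) ->
  Rsum n (fun j => Rsum_list (fun x => f x * al j x) l) <= Rsum_list f l.
Proof.
  intros Hf Hal. unfold Rsum. rewrite <- Rsum_list_swap. apply Rsum_list_le; intros x Hx.
  rewrite Rsum_list_scal. fold (Rsum n (fun j => al j x)).
  pose proof (Hal x). pose proof (Hf x Hx). nra.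
Qed.

Lemma alias_kernel_row_le d c z n N p i : (0 < n)%nat ->
  Rsum n (fun j => alias_kernel d c z n N p i j) <=
  Rsum_list (fun m => Cabs (c m) * (1 + 2 * normsqZ m) ^ p) (box d N).
Proof.
  intros Hn.
  apply (Rsum_Rsum_list_indicator_le n _ (fun j m => aliased z n m (Z.of_nat j - Z.of_nat i))).
  - intros m _. pose proof (normsqZ_nonneg m).
    apply Rmult_le_pos; [apply Cabs_nonneg | apply pow_le; lra].
  - intros m. now apply Rsum_aliased_row_le_1.
Qed.

Lemma alias_kernel_col_le d c z n N p j : (0 < n)%nat ->
  Rsum n (fun i => alias_kernel d c z n N p i j) <=
  Rsum_list (fun m => Cabs (c m) * (1 + 2 * normsqZ m) ^ p) (box d N).
Proof.
  intros Hn.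
  apply (Rsum_Rsum_list_indicator_le n _ (fun i m => aliased z n m (Z.of_nat j - Z.of_nat i))).
  - intros m _. pose proof (normsqZ_nonneg m).
    apply Rmult_le_pos; [apply Cabs_nonneg | apply pow_le; lra].
  - intros m. now apply Rsum_aliased_col_le_1.
Qed.

Lemma box_length d N m : In m (box d N) -> length m = d.
Proof.
  revert m; induction d; simpl; intros m H.
  - now destruct H as [<-|[]].
  - apply in_flat_map in H as [a [_ Ha]]. apply in_map_iff in Ha as [m' [<- Hm']].
    simpl. f_equal; auto.
Qed.

Lemma commutator_entry_le gamma d c v z n h N p eps i j :
  0 < gamma -> (0 < n)%nat -> minimal_aa_set d z n h -> length z = d ->
  (i < n)%nat -> (j < n)%nat ->
  (forall k, (k < n)%nat ->
     Cabs (Csub (v (latpt z n k)) (fourier_partial d c (latpt z n k) N)) <= eps) ->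
  Rabs (Ddiag gamma h i - Ddiag gamma h j) ^ p *
    Cabs (dft n (fun k => v (latpt z n k)) (Z.of_nat j - Z.of_nat i)) <=
  (1 + 2 * gamma * PI ^ 2) ^ p * alias_kernel d c z n N p i j * (1 + Ddiag gamma h j) ^ p +
    eps * Rabs (Ddiag gamma h i - Ddiag gamma h j) ^ p.
Proof.
  intros Hg Hn Hmin Hz Hi Hj Happrox.
  assert (HnR : 0 < INR n) by now apply lt_0_INR.
  set (Dl := Rabs (Ddiag gamma h i - Ddiag gamma h j) ^ p).
  assert (HDl : 0 <= Dl) by apply pow_le, Rabs_pos.
  set (al := Rsum_list (fun m => Cabs (c m) * aliased z n m (Z.of_nat j - Z.of_nat i)) (box d N)).
  assert (Hdft : Cabs (dft n (fun k => v (latpt z n k)) (Z.of_nat j - Z.of_nat i)) <= al + eps).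
  { eapply Rle_trans;
      [apply (Cabs_dft_sub_le n _ (fun k => fourier_partial d c (latpt z n k) N)); auto|].
    apply Rplus_le_compat; [now apply Cabs_dft_fourier_partial_le|].
    apply Rle_trans with (/ INR n * (INR n * eps)); [|right; field; lra].
    apply Rmult_le_compat_l; [left; now apply Rinv_0_lt_compat|].
    rewrite <- Rsum_const. now apply Rsum_le. }
  assert (Hal : Dl * al <=
     (1 + 2 * gamma * PI ^ 2) ^ p * alias_kernel d c z n N p i j * (1 + Ddiag gamma h j) ^ p).
  { unfold al, alias_kernel. rewrite <- Rsum_list_scal.
    replace (_ * Rsum_list _ _ * _) with (Rsum_list (fun m =>
      (1 + 2 * gamma * PI ^ 2) ^ p * (1 + Ddiag gamma h j) ^ p *
      (Cabs (c m) * (1 + 2 * normsqZ m) ^ p * aliased z n m (Z.of_nat j - Z.of_nat i))) (box d N))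
      by (rewrite Rsum_list_scal; ring).
    apply Rsum_list_le; intros m Hm. apply box_length in Hm.
    pose proof (Cabs_nonneg (c m)).
    unfold aliased; destruct (Z.eqb _ 0) eqn:E; [|rewrite !Rmult_0_r; lra].
    assert (Hbound : Dl <=
      ((1 + 2 * gamma * PI ^ 2) * (1 + Ddiag gamma h j) * (1 + 2 * normsqZ m)) ^ p).
    { apply pow_incr. split; [apply Rabs_pos|].
      apply (Ddiag_diff_le gamma d z n h m i j); auto. unfold aliased. now rewrite E. }
    rewrite !Rpow_mult_distr in Hbound. nra. }
  unfold Dl in *. nra.
Qed.

Lemma commutator_schur_kernel p d gamma c v z n h S0 eps :
  0 < gamma -> (0 < n)%nat -> minimal_aa_set d z n h -> length z = d ->
  (forall x, length x = d -> fourier_series_at d c x (v x)) ->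
  (forall N, Rsum_list (fun m => Cabs (c m) * (1 + 2 * normsqZ m) ^ p) (box d N) <= S0) ->
  0 < eps ->
  let M := / gamma * (1 + 2 * gamma * PI ^ 2) ^ p * S0 in
  exists K : nat -> nat -> R,
    (forall i j, (i < n)%nat -> (j < n)%nat -> 0 <= K i j) /\
    (forall i, (i < n)%nat -> Rsum n (fun j => K i j) <= M) /\
    (forall j, (j < n)%nat -> Rsum n (fun i => K i j) <= M) /\
    (forall i j, (i < n)%nat -> (j < n)%nat ->
       / gamma * Rabs (Ddiag gamma h i - Ddiag gamma h j) ^ p *
         Cabs (dft n (fun k => v (latpt z n k)) (Z.of_nat j - Z.of_nat i)) <=
       K i j * (1 + Ddiag gamma h j) ^ p +
         eps * (/ gamma * Rabs (Ddiag gamma h i - Ddiag gamma h j) ^ p)).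
Proof.
  intros Hg Hn Hmin Hz Hfs HS0 He M.
  assert (Hgi : 0 < / gamma) by now apply Rinv_0_lt_compat.
  set (c0 := 1 + 2 * gamma * PI ^ 2).
  assert (Hc0 : 0 <= / gamma * c0 ^ p)
    by (apply Rmult_le_pos; [lra | apply pow_le; unfold c0; pose proof PI_RGT_0;
                                   pose proof (pow_le PI 2); nra]).
  destruct (Un_cv_finite_uniform (fun k => v (latpt z n k))
              (fun N k => fourier_partial d c (latpt z n k) N) n) with eps as [N0 HN0]; auto.
  { intros k _. apply Hfs. unfold latpt. now rewrite length_map. }
  exists (fun i j => / gamma * c0 ^ p * alias_kernel d c z n N0 p i j).
  repeat split.
  - intros i j _ _. apply Rmult_le_pos; auto using alias_kernel_nonneg.
  - intros i _. rewrite Rsum_scal. apply Rmult_le_compat_l; auto.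
    eapply Rle_trans; [now apply alias_kernel_row_le | apply HS0].
  - intros j _. rewrite Rsum_scal. apply Rmult_le_compat_l; auto.
    eapply Rle_trans; [now apply alias_kernel_col_le | apply HS0].
  - intros i j Hi Hj.
    pose proof (commutator_entry_le gamma d c v z n h N0 p eps i j Hg Hn Hmin Hz Hi Hj
                  (HN0 N0 (le_n _))) as H.
    fold c0 in H.
    replace (_ + _) with (/ gamma * (c0 ^ p * alias_kernel d c z n N0 p i j *
      (1 + Ddiag gamma h j) ^ p + eps * Rabs (Ddiag gamma h i - Ddiag gamma h j) ^ p)) by ring.
    rewrite Rmult_assoc. apply Rmult_le_compat_l; lra.
Qed.

Lemma commutator_power_bound (p : nat) d gamma alpha c v :
  0 < gamma -> korobov d alpha c ->
  (forall x, length x = d -> fourier_series_at d c x (v x)) ->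
  1 < 2 * alpha - INR (2 * (2 * p)) ->
  exists C : R, forall n z h (y : nat -> R) (A E : mat),
    (0 < n)%nat -> length z = d -> minimal_aa_set d z n h ->
    (forall i j, (i < n)%nat -> (j < n)%nat ->
       Cabs (A i j) = / gamma * Rabs (Ddiag gamma h i - Ddiag gamma h j) ^ p *
                      Cabs (dft n (fun k => v (latpt z n k)) (Z.of_nat j - Z.of_nat i))) ->
    (forall i j, (i < n)%nat -> (j < n)%nat ->
       E i j = if Nat.eqb i j then RtoC ((1 + Ddiag gamma h i) ^ p) else C0) ->
    vnorm n (mvec n A (realvec y)) <= C * vnorm n (mvec n E (realvec y)).
Proof.
  intros Hg Hkor Hfs Halpha.
  destruct (korobov_moment_bounded d alpha c p Hkor Halpha) as [S0 [HS0 HS0b]].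
  set (M := / gamma * (1 + 2 * gamma * PI ^ 2) ^ p * S0).
  assert (HM : 0 <= M).
  { pose proof PI_RGT_0. pose proof (pow_le PI 2).
    unfold M. repeat apply Rmult_le_pos; auto.
    - left; now apply Rinv_0_lt_compat.
    - apply pow_le. nra. }
  exists M. intros n z h y A E Hn Hz Hmin HA HE.
  apply vnorm_le_of_Rsum_sqr; auto.
  eapply Rle_trans.
  { apply (Rsum_le n _ (fun i => Rsum n (fun j => Cabs (A i j) * Rabs (y j)) *
                                 Rsum n (fun j => Cabs (A i j) * Rabs (y j)))).
    intros i _. rewrite <- Cabs_sqr.
    pose proof (Cabs_mvec_realvec_le n A y i). pose proof (Cabs_nonneg (mvec n A (realvec y) i)).
    now apply Rmult_le_compat. }
  eapply Rle_trans.
  { apply (schur_test_approx n _ (fun i j => / gamma * Rabs (Ddiag gamma h i - Ddiag gamma h j) ^ p)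
             (fun j => (1 + Ddiag gamma h j) ^ p) (fun j => Rabs (y j)) M HM).
    - intros i j _ _. split; [apply Cabs_nonneg|].
      apply Rmult_le_pos; [left; now apply Rinv_0_lt_compat | apply pow_le, Rabs_pos].
    - intros j _. split; [|apply Rabs_pos]. apply pow_le.
      pose proof (Ddiag_nonneg gamma h j Hg). lra.
    - intros eps He.
      destruct (commutator_schur_kernel p d gamma c v z n h S0 eps Hg Hn Hmin Hz Hfs HS0b He)
        as [K [HK0 [HKr [HKc HK]]]].
      exists K. repeat split; auto. intros i j Hi Hj. rewrite HA by auto. now apply HK. }
  right. f_equal. apply Rsum_ext; intros j Hj.
  rewrite (mvec_diag n E (fun i => (1 + Ddiag gamma h i) ^ p) _ j Hj) by (intros; now apply HE).
  unfold Cmod2, Cmul, RtoC, realvec; simpl.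
  assert (Rabs (y j) * Rabs (y j) = y j * y j) by (rewrite <- Rabs_mult; apply Rabs_pos_eq; nra).
  nra.
Qed.

Definition isdiag (D : mat) (f : nat -> R) : Prop :=
  forall i j, D i j = if Nat.eqb i j then RtoC (f i) else C0.

Lemma mmul_diag_l n D f B i j : isdiag D f -> (i < n)%nat ->
  mmul n D B i j = Cmul (RtoC (f i)) (B i j).
Proof.
  intros HD Hi. unfold mmul. rewrite (Csum_unique n _ i Hi).
  - now rewrite HD, Nat.eqb_refl.
  - intros k _ Hk. rewrite HD. destruct (Nat.eqb_spec i k); [lia|].
    apply Cpx_ext; unfold Cmul, C0; simpl; ring.
Qed.

Lemma mmul_diag_r n D f B i j : isdiag D f -> (j < n)%nat ->
  mmul n B D i j = Cmul (RtoC (f j)) (B i j).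
Proof.
  intros HD Hj. unfold mmul. rewrite (Csum_unique n _ j Hj).
  - rewrite HD, Nat.eqb_refl. apply Cmul_comm.
  - intros k _ Hk. rewrite HD. destruct (Nat.eqb_spec k j); [lia|].
    apply Cpx_ext; unfold Cmul, C0; simpl; ring.
Qed.

Lemma comm_diag n D f B i j : isdiag D f -> (i < n)%nat -> (j < n)%nat ->
  comm n D B i j = Cmul (RtoC (f i - f j)) (B i j).
Proof.
  intros HD Hi Hj. unfold comm, msub. rewrite (mmul_diag_l n D f), (mmul_diag_r n D f) by auto.
  apply Cpx_ext; unfold Csub, Cmul, RtoC; simpl; ring.
Qed.

Lemma isdiag_madd_idm D f : isdiag D f -> isdiag (madd D idm) (fun i => f i + 1).
Proof.
  intros HD i j. unfold madd, idm. rewrite HD.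
  destruct (Nat.eqb i j); apply Cpx_ext; unfold Cadd, RtoC, C0, C1; simpl; ring.
Qed.

Lemma isdiag_D gamma h : isdiag (mscale (gamma / 2) (Dnmat h)) (Ddiag gamma h).
Proof.
  intros i j. unfold mscale, Dnmat, diagm, Ddiag.
  destruct (Nat.eqb i j); apply Cpx_ext; unfold Cmul, RtoC, C0; simpl; ring.
Qed.

Lemma Cabs_W_entry gamma n v z Finv i j : 0 < gamma -> (0 < n)%nat ->
  is_inverse n (Fmat n) Finv -> (i < n)%nat -> (j < n)%nat ->
  Cabs (mscale (/ gamma) (mmul n (mmul n (Fmat n) (Vmat v z n)) Finv) i j) =
  / gamma * Cabs (dft n (fun k => v (latpt z n k)) (Z.of_nat j - Z.of_nat i)).
Proof.
  intros Hg Hn HI Hi Hj. unfold mscale.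
  rewrite Cabs_mul, Cabs_RtoC, FVFinv_entry by auto.
  rewrite Rabs_pos_eq; [reflexivity | left; now apply Rinv_0_lt_compat].
Qed.

Theorem mainTheorem4 :
  forall (d : nat) (gamma alpha beta : R)
         (cv : list Z -> Cpx) (v : list R -> Cpx) (cg : list Z -> Cpx),
    0 < gamma ->
    korobov d alpha cv ->
    (forall x : list R, length x = d -> fourier_series_at d cv x (v x)) ->
    2 <= beta -> korobov d beta cg ->
    (5/2 < alpha ->
      exists c1 : R,
        forall (n : nat) (z : list Z) (h : nat -> list Z) (Finv : mat) (y : nat -> R),
          (0 < n)%nat -> length z = d -> coprime_gen z n ->
          minimal_aa_set d z n h ->
          is_inverse n (Fmat n) Finv ->
          let D := mscale (gamma / 2) (Dnmat h) in
          let W := mscale (/ gamma) (mmul n (mmul n (Fmat n) (Vmat v z n)) Finv) in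
          vnorm n (mvec n (comm n D W) (realvec y))
            <= c1 * vnorm n (mvec n (madd D idm) (realvec y))) /\
    (9/2 < alpha ->
      exists c2 : R,
        forall (n : nat) (z : list Z) (h : nat -> list Z) (Finv : mat) (y : nat -> R),
          (0 < n)%nat -> length z = d -> coprime_gen z n ->
          minimal_aa_set d z n h ->
          is_inverse n (Fmat n) Finv ->
          let D := mscale (gamma / 2) (Dnmat h) in
          let W := mscale (/ gamma) (mmul n (mmul n (Fmat n) (Vmat v z n)) Finv) in
          vnorm n (mvec n (comm n D (comm n D W)) (realvec y))
            <= c2 * vnorm n (mvec n (mmul n (madd D idm) (madd D idm)) (realvec y))).
Proof.
  (* Neither [g] nor the coprimality of [z] enters the estimates. *)
  intros d gamma alpha beta cv v cg Hg Hkor Hfs _ _.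
  split; intros Halpha.
  - destruct (commutator_power_bound 1 d gamma alpha cv v Hg Hkor Hfs) as [c Hc];
      [simpl; lra|].
    exists c. intros n z h Finv y Hn Hz _ Hmin HI D W.
    apply (Hc n z h); auto; intros i j Hi Hj.
    + unfold D, W. rewrite (comm_diag n _ (Ddiag gamma h)), Cabs_mul, Cabs_RtoC,
        Cabs_W_entry by auto using isdiag_D. ring.
    + unfold D. rewrite (isdiag_madd_idm _ _ (isdiag_D gamma h)).
      destruct (Nat.eqb i j); auto. f_equal; ring.
  - destruct (commutator_power_bound 2 d gamma alpha cv v Hg Hkor Hfs) as [c Hc];
      [simpl; lra|].
    exists c. intros n z h Finv y Hn Hz _ Hmin HI D W.
    apply (Hc n z h); auto; intros i j Hi Hj.
    + unfold D, W. rewrite !(comm_diag n _ (Ddiag gamma h)), !Cabs_mul, !Cabs_RtoC,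
        Cabs_W_entry by auto using isdiag_D. ring.
    + unfold D. rewrite (mmul_diag_l n _ _ _ i j (isdiag_madd_idm _ _ (isdiag_D gamma h))) by auto.
      rewrite (isdiag_madd_idm _ _ (isdiag_D gamma h)).
      destruct (Nat.eqb i j); apply Cpx_ext; unfold Cmul, RtoC, C0; simpl; ring.
Qed.
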